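(* Let $r, s, m, n$ be positive integers, and let $f: V(H_{n,m}) \rightarrow \{-r,s\}$ be a function. If there are directed $m$-paths $P$ and $Q$ in $H_{n,m}$ such that $f(V(P)) < f(V(Q))$, then for any $p \in L(r,s,m)$ with $f(V(P)) \le p \le f(V(Q))$ there is a directed $m$-path $P^*$ in $H_{n,m}$ such that $f(V(P^* )) = p$.
   Context: For a set $Y$ of vertices, $f(Y)=\sum_{y\in Y}f(y)$. $H_{n,m}$ is the directed graph whose vertex set is the disjoint union of $V_1,\dots,V_m$ with $|V_i|=n$, and whose arc set is $\bigcup_{i=1}^{m-1}\{(v,w): v\in V_i, w\in V_{i+1}\}$. A directed $m$-path is a directed path with $m$ vertices. $L(r,s,m)=\{-rx+sy : x,y\in\mathbb{Z}, x,y\ge 0, x+y=m\}$. *)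

From mathcomp Require Import all_boot all_order all_algebra.
Set Implicit Arguments. Unset Strict Implicit. Unset Printing Implicit Defensive.
Import Order.TTheory GRing.Theory Num.Theory.

(* Vertices of H_{n,m}: (i, v) with i : 'I_m the layer V_{i+1} and v : 'I_n
   the index inside the layer. *)
Definition Hvert (n m : nat) := ('I_m * 'I_n)%type.

Definition Harc (n m : nat) : rel (Hvert n m) :=
  fun v w => (v.1 : nat).+1 == (w.1 : nat).

Definition is_dpath (n m : nat) (k : nat) (P : seq (Hvert n m)) : Prop :=
  [/\ size P = k, uniq P & sorted (@Harc n m) P].

Definition fsum (n m : nat) (f : Hvert n m -> int) (P : seq (Hvert n m)) : int :=
  (\sum_(y <- P) f y)%R.

Definition Lset (r s m : nat) : pred int :=
  fun p => [exists x : 'I_m.+1,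
              p == (- (r%:Z) * (x : nat)%:Z + (s%:Z) * (m - x)%:Z)%R].

(* Along a directed m-path of H_{n,m} the i-th vertex lies in the i-th layer,
   so the splice of the first k vertices of P with the last m - k vertices of Q
   is again a directed m-path.  The f-value of an m-path with c vertices of
   value -r is -rc + s(m - c), strictly decreasing in c.  As k runs from 0 (the
   path Q) to m (the path P), c grows by at most one per step, so it takes
   every value between its ends, in particular the x with p = -rx + s(m - x). *)

From mathcomp Require Import all_boot all_order all_algebra.
From mathcomp Require Import zify ring.
Import Order.TTheory GRing.Theory Num.Theory.

Set Implicit Arguments.
Unset Strict Implicit.
Unset Printing Implicit Defensive.

Definition succ_rel : rel nat := fun a b => a.+1 == b.

Lemma path_succ_iota (i : nat) (s : seq nat) :
  path succ_rel i s = (s == iota i.+1 (size s)).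
Proof.
elim: s i => // j s IHs i.
have -> : iota i.+1 (size (j :: s)) = i.+1 :: iota i.+2 (size s) by [].
rewrite eqseq_cons -IHs /= /succ_rel eq_sym.
by case: (eqVneq j i.+1) => [->|].
Qed.

Lemma sorted_succ_iota (s : seq nat) :
  sorted succ_rel s = (s == iota (head 0 s) (size s)).
Proof. by case: s => // i s; rewrite /= path_succ_iota eqseq_cons eqxx. Qed.

Lemma count_splice_succ (T : Type) (a : pred T) (P Q : seq T) k :
  count a (take k.+1 P ++ drop k.+1 Q) <= (count a (take k P ++ drop k Q)).+1.
Proof.
rewrite -[in take _ P]addn1 takeD -(cat_take_drop 1 (drop k Q)) drop_drop add1n.
have : count a (take 1 (drop k P)) <= 1.
  by rewrite (leq_trans (count_size _ _)) // size_take_min geq_minl.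
rewrite !count_cat; lia.
Qed.

Lemma discrete_ivt (c : nat -> nat) (x k : nat) :
  (forall j, c j.+1 <= (c j).+1) -> c 0 <= x <= c k ->
  exists2 j, j <= k & c j = x.
Proof.
move=> c_step /andP[c0x]; elim: k => [|k IHk] xck.
  by exists 0 => //; apply/eqP; rewrite eqn_leq c0x.
have [/IHk[j jk cjx]|ckx] := leqP x (c k); first by exists j => //; apply: leqW.
by exists k.+1 => //; have := c_step k; lia.
Qed.

Section DirectedPaths.
Variables n m : nat.
Implicit Types S : seq (Hvert n m).

Definition layer (v : Hvert n m) : nat := v.1.

Lemma sorted_Harc S : sorted (@Harc n m) S = sorted succ_rel (map layer S).
Proof. by rewrite sorted_map. Qed.

Lemma is_dpathP S : is_dpath m S <-> map layer S = iota 0 m.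
Proof.
split=> [[sizeS _]|layersS].
  rewrite sorted_Harc sorted_succ_iota size_map sizeS => /eqP layersS.
  rewrite layersS; congr iota.
  case: S sizeS layersS => [//|v S] /= sizeS layersS.
  (* The last layer, layer v + m - 1, is below m; hence layer v = 0. *)
  have : (layer v + size S)%N \in layer v :: map layer S.
    by rewrite layersS mem_iota; lia.
  rewrite /layer in_cons => /predU1P[|/mapP[[i j] _ /= eq_i]].
    by have := ltn_ord v.1; lia.
  by have := ltn_ord i; lia.
have sizeS : size S = m by rewrite -(size_map layer) layersS size_iota.
split=> //; first by apply: (@map_uniq _ _ layer); rewrite layersS iota_uniq.
by rewrite sorted_Harc sorted_succ_iota layersS size_iota; case: m.
Qed.

Lemma is_dpath_splice k (P Q : seq (Hvert n m)) :
  is_dpath m P -> is_dpath m Q -> is_dpath m (take k P ++ drop k Q).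
Proof.
move=> /is_dpathP layersP /is_dpathP layersQ; apply/is_dpathP.
by rewrite map_cat map_take map_drop layersP layersQ cat_take_drop.
Qed.

End DirectedPaths.

Local Open Scope ring_scope.

Lemma sum_two_valued (T : Type) (R : zmodType) (f : T -> R) (a b : R)
    (s : seq T) :
  (forall y, f y = a \/ f y = b) ->
  \sum_(y <- s) f y = b *+ size s + (a - b) *+ count (fun y => f y == a) s.
Proof.
move=> fab; elim: s => [|y s IHs]; first by rewrite big_nil /= !mulr0n addr0.
rewrite big_cons IHs /= mulrS mulrnDr addrACA.
case: (eqVneq (f y) a) => [->|]; first by rewrite subrKC.
by case: (fab y) => [->|-> _]; rewrite ?eqxx // mulr0n addr0.
Qed.

Definition lval (r s m x : nat) : int := - r%:Z * x%:Z + s%:Z * (m - x)%:Z.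

(* Beyond m the truncated [m - x] vanishes and lval is -rx, so lval is
   strictly decreasing on all of nat and no bound on x, y is needed. *)
Lemma ler_lval (r s m x y : nat) :
  (0 < r)%N -> (lval r s m x <= lval r s m y) = (y <= x)%N.
Proof. by move=> r_gt0; rewrite /lval; apply/idP/idP; nia. Qed.

Lemma lval_natmul (r s m c : nat) :
  (c <= m)%N -> lval r s m c = s%:Z *+ m + (- r%:Z - s%:Z) *+ c.
Proof.
move=> cm; rewrite /lval -(subnKC cm) addKn mulrnDr !pmulrn !mulrzz.
ring.
Qed.

Lemma fsum_dpath (r s n m : nat) (f : Hvert n m -> int) (S : seq (Hvert n m)) :
  (forall v, f v = - r%:Z \/ f v = s%:Z) -> is_dpath m S ->
  fsum f S = lval r s m (count (fun v => f v == - r%:Z) S).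
Proof.
move=> f2 [sizeS _ _].
rewrite /fsum (sum_two_valued S f2) sizeS lval_natmul //.
by rewrite -[X in (_ <= X)%N]sizeS count_size.
Qed.

Theorem lemma4p2 (r s m n : nat) (f : Hvert n m -> int) :
  (0 < r)%N -> (0 < s)%N -> (0 < m)%N -> (0 < n)%N ->
  (forall v, f v = - (r%:Z) \/ f v = s%:Z) ->
  forall P Q : seq (Hvert n m),
    is_dpath m P -> is_dpath m Q -> fsum f P < fsum f Q ->
    forall p : int, Lset r s m p -> fsum f P <= p -> p <= fsum f Q ->
    exists Pstar : seq (Hvert n m), is_dpath m Pstar /\ fsum f Pstar = p.
Proof.
move=> r_gt0 _ _ _ f2 P Q dP dQ _ p /existsP[x /eqP ->] Pp pQ.
rewrite -/(lval r s m x) !(fsum_dpath f2) // !ler_lval // in Pp pQ.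
set neg := fun v => f v == - r%:Z in Pp pQ.
have ends : (count neg (take 0 P ++ drop 0 Q) <= x
             <= count neg (take m P ++ drop m Q))%N.
  case: dP dQ => [sizeP _ _] [sizeQ _ _].
  rewrite take0 drop0 cat0s pQ.
  by rewrite take_oversize ?drop_oversize ?cats0 ?sizeP ?sizeQ.
have [k _ count_k] := discrete_ivt (count_splice_succ neg P Q) ends.
exists (take k P ++ drop k Q); split; first exact: is_dpath_splice.
rewrite (fsum_dpath f2 (is_dpath_splice k dP dQ)).
by rewrite (congr1 (lval r s m) count_k).
Qed.
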